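(* Let $\mathscr{I}_1\subseteq(0,1)$ and $\mathscr{I}_2\subseteq\mathbb{R}$, and let $f_\nu^\alpha:\mathbb{R}\to\mathbb{R}$ ($\nu\in\mathscr{I}_1$, $\alpha\in\mathscr{I}_2$) be even continuous functions and $\vartheta_\nu^\alpha\in[0,\infty)$ be numbers such that for some $C>0$, $\|f_\nu^\alpha\|_{L^\infty}\le C$, $\vartheta_\nu^\alpha\le C\nu^2$, and $\operatorname{Lip}(f_\nu^\alpha)\le C\nu^{-1}$ for all $\nu,\alpha$ (where $\operatorname{Lip}(f)=\sup_{x\ne y}|f(x)-f(y)|/|x-y|$). Fix $q_*>0$. (i) Define \[ G_\nu^\alpha(X):=\int_0^Xf_\nu^\alpha(s+\vartheta_\nu^\alpha\tanh(q_*s))\,ds-\int_0^{X+\vartheta_\nu^\alpha\tanh(q_*X)}f_\nu^\alpha(s)\,ds . \] Then there exist $L_\nu^{\alpha,\infty}\in\mathbb{R}$ such that \[ \sup_{\nu\in\mathscr{I}_1,\alpha\in\mathscr{I}_2}\left[\nu^{-1}\left(\sup_{X\in\mathbb{R}}e^{q_*|X|}\left|G_\nu^\alpha(X)-\nu L_\nu^{\alpha,\infty}\tanh(q_*X)\right|\right)+|L_\nu^{\alpha,\infty}|\right]<\infty . \] (ii) Define $H_\nu^\alpha(X):=f_\nu^\alpha(X+\nu+\vartheta_\nu^\alpha\tanh(q_*X+q_*\nu))-f_\nu^\alpha(X+\nu+\vartheta_\nu^\alpha\tanh(q_*X))$. Then \[ \sup_{\nu\in\mathscr{I}_1,\alpha\in\mathscr{I}_2,X\in\mathbb{R}}\nu^{-2}e^{2q_*|X|}|H_\nu^\alpha(X)|<\infty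 . \] *)

From Stdlib Require Import Reals.
From Coquelicot Require Import Coquelicot.
Open Scope R_scope.

Definition Gfun (f : R -> R) (theta qs X : R) : R :=
  RInt (fun s => f (s + theta * tanh (qs * s))) 0 X
  - RInt f 0 (X + theta * tanh (qs * X)).

Definition Hfun (f : R -> R) (theta qs nu X : R) : R :=
  f (X + nu + theta * tanh (qs * X + qs * nu))
  - f (X + nu + theta * tanh (qs * X)).

(* Since G'(X) = - θ q sech²(qX) f(X + θ tanh(qX)) and |f| <= C, the derivative of G is
   dominated by that of θ C tanh(q·), so G ± θ C tanh(q·) are monotone.  Hence G has a
   limit g at +∞ with |G(X) - g tanh(qX)| <= 2 θ C (1 - tanh(qX)) <= 2 θ C e^{-qX}, and
   L := g / ν works because θ <= C ν²; G is odd because f is even, which covers X < 0.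
   For (ii), the Lipschitz bound reduces H to θ |tanh(qX + qν) - tanh(qX)|, and the
   mean value theorem with tanh' = sech² <= 4 e^{-2|t|} gives the factor ν e^{-2q|X|}. *)

From Stdlib Require Import Reals Lra ClassicalEpsilon.
From Coquelicot Require Import Coquelicot.
Open Scope R_scope.

Lemma exp_le_compat x y : x <= y -> exp x <= exp y.
Proof. intros [Hlt | ->]; [left; now apply exp_increasing | right; reflexivity]. Qed.

Lemma cosh_ge_1 t : 1 <= cosh t.
Proof.
  unfold cosh. pose proof (exp_ineq1_le t). pose proof (exp_ineq1_le (- t)). lra.
Qed.

Lemma exp_abs_le_cosh t : exp (Rabs t) <= 2 * cosh t.
Proof.
  unfold cosh. pose proof (exp_pos t). pose proof (exp_pos (- t)).
  destruct (Rle_dec 0 t).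
  - rewrite Rabs_pos_eq by lra. lra.
  - rewrite Rabs_left by lra. lra.
Qed.

Lemma cosh_sqr_sub_sinh_sqr t : cosh t ^ 2 - sinh t ^ 2 = 1.
Proof.
  unfold cosh, sinh. rewrite exp_Ropp. pose proof (exp_pos t). field. lra.
Qed.

Lemma tanh_0 : tanh 0 = 0.
Proof. unfold tanh. rewrite sinh_0. lra. Qed.

Lemma tanh_opp t : tanh (- t) = - tanh t.
Proof.
  unfold tanh, cosh, sinh. rewrite Ropp_involutive. pose proof (exp_pos t).
  pose proof (exp_pos (- t)). field. lra.
Qed.

Lemma tanh_lt_1 t : tanh t < 1.
Proof.
  pose proof (cosh_ge_1 t). unfold tanh. apply Rlt_div_l; [lra|].
  assert (sinh t < cosh t) by (unfold sinh, cosh; pose proof (exp_pos (- t)); lra).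
  lra.
Qed.

Lemma one_sub_tanh_sqr t : 1 - tanh t ^ 2 = / cosh t ^ 2.
Proof.
  unfold tanh. pose proof (cosh_ge_1 t). pose proof (cosh_sqr_sub_sinh_sqr t).
  apply (Rmult_eq_reg_r (cosh t ^ 2)); [|nra]. field_simplify; lra.
Qed.

Lemma one_sub_tanh_sqr_nonneg t : 0 <= 1 - tanh t ^ 2.
Proof.
  rewrite one_sub_tanh_sqr. left. apply Rinv_0_lt_compat, pow_lt.
  pose proof (cosh_ge_1 t). lra.
Qed.

Lemma one_sub_tanh_sqr_le t : 1 - tanh t ^ 2 <= 4 * exp (- (2 * Rabs t)).
Proof.
  pose proof (exp_abs_le_cosh t). pose proof (exp_pos (Rabs t)). pose proof (cosh_ge_1 t).
  assert (E : exp (- (2 * Rabs t)) = / exp (Rabs t) ^ 2).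
  { rewrite exp_Ropp. f_equal. simpl. rewrite Rmult_1_r, <- exp_plus. f_equal. ring. }
  rewrite one_sub_tanh_sqr, E.
  replace (/ cosh t ^ 2) with (4 * / (2 * cosh t) ^ 2) by (field; lra).
  apply Rmult_le_compat_l; [lra|].
  apply Rinv_le_contravar; [now apply pow_lt | apply pow_incr; lra].
Qed.

Lemma exp_mul_one_sub_tanh_le t : exp t * (1 - tanh t) <= 1.
Proof.
  pose proof (cosh_ge_1 t).
  assert (E : exp t * (cosh t - sinh t) = 1).
  { unfold cosh, sinh. rewrite exp_Ropp. pose proof (exp_pos t). field. lra. }
  replace (exp t * (1 - tanh t)) with (/ cosh t).
  2: { apply (Rmult_eq_reg_r (cosh t)); [|lra]. unfold tanh. field_simplify; lra. }
  rewrite <- Rinv_1. apply Rinv_le_contravar; lra.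
Qed.

Lemma is_derive_tanh t : is_derive tanh t (1 - tanh t ^ 2).
Proof.
  pose proof (cosh_ge_1 t) as Hcosh. unfold tanh.
  apply (is_derive_ext (fun s => sinh s / cosh s)); [reflexivity|].
  unfold cosh in Hcosh. unfold sinh, cosh. auto_derive.
  - lra.
  - field. lra.
Qed.

Lemma tanh_sub_le a d :
  Rabs (tanh (a + d) - tanh a) <= 4 * Rabs d * exp (2 * Rabs d) * exp (- (2 * Rabs a)).
Proof.
  destruct (MVT_gen tanh a (a + d) (fun t => 1 - tanh t ^ 2)) as [c [Hc ->]].
  - intros t _. apply is_derive_tanh.
  - intros t _. apply continuity_pt_filterlim, (ex_derive_continuous tanh).
    eexists. apply is_derive_tanh.
  - replace (a + d - a) with d by ring.
    assert (Hca : Rabs a - Rabs d <= Rabs c).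
    { assert (Hdist : Rabs (c - a) <= Rabs d).
      { destruct (Rle_or_lt 0 d).
        - rewrite Rmin_left, Rmax_right in Hc by lra. rewrite (Rabs_pos_eq d) by lra.
          apply Rabs_le_between; lra.
        - rewrite Rmin_right, Rmax_left in Hc by lra. rewrite (Rabs_left d) by lra.
          apply Rabs_le_between; lra. }
      rewrite <- Rabs_Ropp, Ropp_minus_distr in Hdist.
      pose proof (Rabs_triang_inv a c). lra. }
    assert (exp (- (2 * Rabs c)) <= exp (2 * Rabs d) * exp (- (2 * Rabs a))).
    { rewrite <- exp_plus. apply exp_le_compat. lra. }
    rewrite Rabs_mult, (Rabs_pos_eq (1 - _)) by apply one_sub_tanh_sqr_nonneg.
    pose proof (one_sub_tanh_sqr_le c). pose proof (Rabs_pos d).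
    pose proof (exp_pos (- (2 * Rabs c))).
    nra.
Qed.

Lemma is_derive_tanh_mul q x :
  is_derive (fun s => tanh (q * s)) x (q * (1 - tanh (q * x) ^ 2)).
Proof.
  assert (Hq : is_derive (fun s => q * s) x q) by (auto_derive; [exact I | ring]).
  exact (is_derive_comp tanh _ x _ _ (is_derive_tanh _) Hq).
Qed.

Lemma is_derive_tanh_shift th q x :
  is_derive (fun s => s + th * tanh (q * s)) x (1 + th * (q * (1 - tanh (q * x) ^ 2))).
Proof.
  apply (is_derive_plus (fun s => s) (fun s => th * tanh (q * s))).
  - exact (@is_derive_id R_AbsRing x).
  - apply is_derive_scal, is_derive_tanh_mul.
Qed.

Lemma tanh_shift_opp th q x :
  - x + th * tanh (q * - x) = - (x + th * tanh (q * x)).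
Proof. replace (q * - x) with (- (q * x)) by ring. rewrite tanh_opp. ring. Qed.

Lemma nondecreasing_of_derive_nonneg (F dF : R -> R) :
  (forall x, is_derive F x (dF x)) -> (forall x, 0 <= dF x) ->
  forall x y, x <= y -> F x <= F y.
Proof.
  intros HF Hpos x y Hxy.
  destruct (MVT_gen F x y dF) as [c [_ Hc]].
  - intros; apply HF.
  - intros z _. apply continuity_pt_filterlim, (ex_derive_continuous F).
    eexists; apply HF.
  - pose proof (Hpos c). nra.
Qed.

Lemma abs_sub_le_of_derive_abs_le (F T dF dT : R -> R) :
  (forall x, is_derive F x (dF x)) -> (forall x, is_derive T x (dT x)) ->
  (forall x, Rabs (dF x) <= dT x) ->
  forall x y, x <= y -> Rabs (F y - F x) <= T y - T x.
Proof.
  intros HF HT Hle x y Hxy.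
  assert (Hminus : T x - F x <= T y - F y).
  { apply (nondecreasing_of_derive_nonneg (fun s => T s - F s) (fun s => dT s - dF s)); auto.
    - intros s. apply (is_derive_minus T F); auto.
    - intros s. pose proof (Hle s) as H. apply Rabs_le_between in H. lra. }
  assert (Hplus : T x + F x <= T y + F y).
  { apply (nondecreasing_of_derive_nonneg (fun s => T s + F s) (fun s => dT s + dF s)); auto.
    - intros s. apply (is_derive_plus T F); auto.
    - intros s. pose proof (Hle s) as H. apply Rabs_le_between in H. lra. }
  apply Rabs_le_between. lra.
Qed.

Lemma exists_mul_asymptote (F T : R -> R) (c : R) :
  0 <= c -> F 0 = 0 -> T 0 = 0 -> (forall x, T x <= 1) ->
  (forall x y, 0 <= x <= y -> Rabs (F y - F x) <= c * (T y - T x)) ->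
  exists g, Rabs g <= c /\
    forall X, 0 <= X -> Rabs (F X - g * T X) <= 2 * c * (1 - T X).
Proof.
  intros Hc HF0 HT0 HT1 Hvar.
  (* g is the limit of F at +oo, computed as sup (F + c T) - c. *)
  set (E := fun y => exists X, 0 <= X /\ y = F X + c * T X).
  assert (Henv : forall X Y, 0 <= X -> 0 <= Y -> F X + c * T X <= F Y - c * T Y + 2 * c).
  { intros X Y HX HY. pose proof (HT1 X). pose proof (HT1 Y).
    destruct (Rle_or_lt X Y) as [HXY | HYX].
    - pose proof (Hvar X Y (conj HX HXY)) as Hd. apply Rabs_le_between in Hd. nra.
    - pose proof (Hvar Y X (conj HY (Rlt_le _ _ HYX))) as Hd.
      apply Rabs_le_between in Hd. nra. }
  destruct (completeness E) as [l [Hub Hlub]].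
  - exists (2 * c). intros y [X [HX ->]].
    specialize (Henv X 0 HX (Rle_refl 0)). rewrite HF0, HT0 in Henv. lra.
  - exists (F 0 + c * T 0). exists 0. split; [lra | reflexivity].
  - assert (Hl_ge : forall X, 0 <= X -> F X + c * T X <= l).
    { intros X HX. apply Hub. exists X. auto. }
    assert (Hl_le : forall X, 0 <= X -> l <= F X - c * T X + 2 * c).
    { intros X HX. apply Hlub. intros y [Y [HY ->]]. auto. }
    pose proof (Hl_ge 0 (Rle_refl 0)) as H0. pose proof (Hl_le 0 (Rle_refl 0)) as H2.
    rewrite HF0, HT0 in H0, H2.
    exists (l - c). split.
    + apply Rabs_le_between. lra.
    + intros X HX. specialize (Hl_ge X HX). specialize (Hl_le X HX). pose proof (HT1 X).
      apply Rabs_le_between. nra.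
Qed.

Lemma is_derive_RInt_from_0 (k : R -> R) x :
  (forall z, continuous k z) -> is_derive (RInt k 0) x (k x).
Proof.
  intros Hk. apply (is_derive_RInt k (RInt k 0) 0); [|apply Hk].
  apply filter_forall. intros b. apply (RInt_correct k), (ex_RInt_continuous k). auto.
Qed.

Lemma RInt_0_opp_of_even (k : R -> R) X :
  (forall z, continuous k z) -> (forall x, k (- x) = k x) ->
  RInt k 0 (- X) = - RInt k 0 X.
Proof.
  intros Hk Heven.
  assert (Hex : forall a b, ex_RInt k a b) by (intros; apply (ex_RInt_continuous k); auto).
  pose proof (is_RInt_comp_opp k 0 X (RInt k (- 0) (- X)) (RInt_correct _ _ _ (Hex _ _))) as H.
  rewrite Ropp_0 in H. rewrite <- (is_RInt_unique _ _ _ _ H).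
  rewrite (RInt_ext _ (fun y => opp (k y))) by (intros; now rewrite Heven).
  exact (RInt_opp k 0 X (Hex 0 X)).
Qed.

Section Gfun_estimates.

Variables (f : R -> R) (th q C : R).
Hypothesis f_cont : forall x, continuous f x.

Lemma continuous_comp_tanh_shift x : continuous (fun s => f (s + th * tanh (q * s))) x.
Proof.
  apply (continuous_comp (fun s => s + th * tanh (q * s)) f); [|apply f_cont].
  apply (ex_derive_continuous (fun s => s + th * tanh (q * s))).
  eexists. apply is_derive_tanh_shift.
Qed.

Lemma is_derive_Gfun X :
  is_derive (Gfun f th q) X (- (th * q * (1 - tanh (q * X) ^ 2)) * f (X + th * tanh (q * X))).
Proof.
  evar (d : R). replace (- _ * _) with d; unfold Gfun.
  - apply (is_derive_minus (RInt (fun s => f (s + th * tanh (q * s))) 0)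
            (fun x => RInt f 0 (x + th * tanh (q * x)))).
    + apply is_derive_RInt_from_0, continuous_comp_tanh_shift.
    + apply (is_derive_comp (RInt f 0) (fun s => s + th * tanh (q * s))).
      * apply is_derive_RInt_from_0, f_cont.
      * apply is_derive_tanh_shift.
  - unfold d, minus, plus, opp, scal; simpl. unfold mult; simpl. ring.
Qed.

Lemma Gfun_0 : Gfun f th q 0 = 0.
Proof.
  unfold Gfun. rewrite Rmult_0_r, tanh_0, Rmult_0_r, Rplus_0_l, !RInt_point. apply Rminus_diag.
Qed.

Hypothesis f_even : forall x, f (- x) = f x.

Lemma Gfun_opp X : Gfun f th q (- X) = - Gfun f th q X.
Proof.
  unfold Gfun. rewrite tanh_shift_opp, !RInt_0_opp_of_even; auto.
  - ring.
  - apply continuous_comp_tanh_shift.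
  - intros x. now rewrite tanh_shift_opp, f_even.
Qed.

Hypotheses (f_bound : forall x, Rabs (f x) <= C) (th_nonneg : 0 <= th) (q_nonneg : 0 <= q).

Lemma Gfun_abs_sub_le x y : x <= y ->
  Rabs (Gfun f th q y - Gfun f th q x) <= th * C * (tanh (q * y) - tanh (q * x)).
Proof.
  intros Hxy. rewrite Rmult_minus_distr_l.
  apply (abs_sub_le_of_derive_abs_le (Gfun f th q) (fun s => th * C * tanh (q * s))
           (fun s => - (th * q * (1 - tanh (q * s) ^ 2)) * f (s + th * tanh (q * s)))
           (fun s => th * C * (q * (1 - tanh (q * s) ^ 2)))); auto.
  - apply is_derive_Gfun.
  - intros s. apply is_derive_scal, is_derive_tanh_mul.
  - intros s. pose proof (one_sub_tanh_sqr_nonneg (q * s)). pose proof (f_bound (s + th * tanh (q * s))).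
    rewrite Rabs_mult, Rabs_Ropp, (Rabs_pos_eq (th * q * _)) by (apply Rmult_le_pos; nra).
    assert (0 <= th * q * (1 - tanh (q * s) ^ 2)) by (apply Rmult_le_pos; nra).
    nra.
Qed.

Lemma Gfun_tanh_asymptote : exists g, Rabs g <= th * C /\
  forall X, exp (q * Rabs X) * Rabs (Gfun f th q X - g * tanh (q * X)) <= 2 * th * C.
Proof.
  assert (HC : 0 <= C) by (pose proof (f_bound 0); pose proof (Rabs_pos (f 0)); lra).
  destruct (exists_mul_asymptote (Gfun f th q) (fun s => tanh (q * s)) (th * C))
    as [g [Hg Hasym]].
  - now apply Rmult_le_pos.
  - apply Gfun_0.
  - rewrite Rmult_0_r. apply tanh_0.
  - intros x. left. apply tanh_lt_1.
  - intros x y [_ Hxy]. now apply Gfun_abs_sub_le.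
  - exists g. split; [exact Hg|]. intros X.
    assert (Hsym : Rabs (Gfun f th q X - g * tanh (q * X))
                   = Rabs (Gfun f th q (Rabs X) - g * tanh (q * Rabs X))).
    { destruct (Rle_or_lt 0 X).
      - now rewrite (Rabs_pos_eq X).
      - rewrite (Rabs_left X), Gfun_opp by lra.
        replace (q * - X) with (- (q * X)) by ring. rewrite tanh_opp, <- Rabs_Ropp.
        f_equal. ring. }
    rewrite Hsym. specialize (Hasym (Rabs X) (Rabs_pos X)).
    pose proof (exp_mul_one_sub_tanh_le (q * Rabs X)). pose proof (exp_pos (q * Rabs X)).
    assert (0 <= th * C) by now apply Rmult_le_pos.
    nra.
Qed.

End Gfun_estimates.

Lemma Hfun_abs_le (f : R -> R) th q nu K X :
  0 <= th -> 0 <= q -> (forall x y, Rabs (f x - f y) <= K * Rabs (x - y)) ->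
  Rabs (Hfun f th q nu X)
  <= 4 * K * th * q * Rabs nu * exp (2 * q * Rabs nu) * exp (- (2 * q * Rabs X)).
Proof.
  intros Hth Hq Hlip.
  assert (HK : 0 <= K).
  { pose proof (Hlip 1 0) as H10. pose proof (Rabs_pos (f 1 - f 0)).
    rewrite Rminus_0_r, Rabs_R1 in H10. lra. }
  pose proof (tanh_sub_le (q * X) (q * nu)) as Htanh.
  rewrite !Rabs_mult, (Rabs_pos_eq q) in Htanh by exact Hq.
  unfold Hfun. eapply Rle_trans; [apply Hlip|].
  replace (X + nu + th * tanh (q * X + q * nu) - (X + nu + th * tanh (q * X)))
    with (th * (tanh (q * X + q * nu) - tanh (q * X))) by ring.
  rewrite Rabs_mult, (Rabs_pos_eq th) by exact Hth.
  replace (2 * q * Rabs nu) with (2 * (q * Rabs nu)) by ring.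
  replace (2 * q * Rabs X) with (2 * (q * Rabs X)) by ring.
  replace (4 * K * th * q * Rabs nu * exp (2 * (q * Rabs nu)) * exp (- (2 * (q * Rabs X))))
    with (K * (th * (4 * (q * Rabs nu) * exp (2 * (q * Rabs nu)) * exp (- (2 * (q * Rabs X))))))
    by ring.
  apply Rmult_le_compat_l; [exact HK|].
  apply Rmult_le_compat_l; [exact Hth | exact Htanh].
Qed.

Lemma Gfun_scaled_asymptote (f : R -> R) th q C nu :
  (forall x, continuous f x) -> (forall x, f (- x) = f x) -> (forall x, Rabs (f x) <= C) ->
  0 <= th -> th <= C * nu ^ 2 -> 0 < nu < 1 -> 0 < q ->
  exists L, forall X,
    / nu * (exp (q * Rabs X) * Rabs (Gfun f th q X - nu * L * tanh (q * X))) + Rabs L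
    <= 3 * C ^ 2.
Proof.
  intros Hcont Heven Hbound Hth0 Hth [Hnu0 Hnu1] Hq.
  destruct (Gfun_tanh_asymptote f th q C) as [g [Hg HgX]]; auto; [lra|].
  exists (g / nu). intros X. specialize (HgX X).
  replace (nu * (g / nu)) with g by (field; lra).
  assert (HC : 0 <= C) by (pose proof (Hbound 0); pose proof (Rabs_pos (f 0)); lra).
  assert (Hth_nu : th / nu <= C * nu) by (apply Rle_div_l; nra).
  assert (0 <= th / nu) by (apply Rle_mult_inv_pos; lra).
  unfold Rdiv in *. rewrite Rabs_mult, (Rabs_pos_eq (/ nu)) by (left; now apply Rinv_0_lt_compat).
  assert (HG : / nu * (exp (q * Rabs X) * Rabs (Gfun f th q X - g * tanh (q * X)))
               <= 2 * C * (th * / nu)).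
  { replace (2 * C * (th * / nu)) with (/ nu * (2 * th * C)) by ring.
    apply Rmult_le_compat_l; [left; now apply Rinv_0_lt_compat | exact HgX]. }
  assert (HL : Rabs g * / nu <= C * (th * / nu)).
  { replace (C * (th * / nu)) with (th * C * / nu) by ring.
    apply Rmult_le_compat_r; [left; now apply Rinv_0_lt_compat | exact Hg]. }
  nra.
Qed.

Lemma Hfun_scaled_le (f : R -> R) th q C nu X :
  (forall x y, Rabs (f x - f y) <= C / nu * Rabs (x - y)) ->
  0 <= th -> th <= C * nu ^ 2 -> 0 < nu < 1 -> 0 < q -> 0 < C ->
  / nu ^ 2 * exp (2 * q * Rabs X) * Rabs (Hfun f th q nu X) <= 4 * C ^ 2 * q * exp (2 * q).
Proof.
  intros Hlip Hth0 Hth [Hnu0 Hnu1] Hq HC.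
  pose proof (Hfun_abs_le f th q nu (C / nu) X Hth0 (Rlt_le _ _ Hq) Hlip) as HH.
  rewrite (Rabs_pos_eq nu) in HH by lra.
  assert (Hweight : 0 < / nu ^ 2 * exp (2 * q * Rabs X))
    by (apply Rmult_lt_0_compat; [apply Rinv_0_lt_compat; nra | apply exp_pos]).
  apply Rle_trans with (/ nu ^ 2 * exp (2 * q * Rabs X) * (4 * (C / nu) * th * q * nu
                        * exp (2 * q * nu) * exp (- (2 * q * Rabs X)))).
  { apply Rmult_le_compat_l; [lra | exact HH]. }
  assert (Hcancel : exp (2 * q * Rabs X) * exp (- (2 * q * Rabs X)) = 1)
    by (rewrite <- exp_plus, Rplus_opp_r; apply exp_0).
  replace (/ nu ^ 2 * exp (2 * q * Rabs X) * (4 * (C / nu) * th * q * nu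
           * exp (2 * q * nu) * exp (- (2 * q * Rabs X))))
    with (4 * C * q * ((th / nu ^ 2) * exp (2 * q * nu))
          * (exp (2 * q * Rabs X) * exp (- (2 * q * Rabs X)))) by (field; lra).
  rewrite Hcancel, Rmult_1_r.
  assert (th / nu ^ 2 <= C) by (apply Rle_div_l; nra).
  assert (0 <= th / nu ^ 2) by (apply Rle_mult_inv_pos; nra).
  assert (exp (2 * q * nu) <= exp (2 * q)) by (apply exp_le_compat; nra).
  pose proof (exp_pos (2 * q * nu)).
  replace (4 * C ^ 2 * q * exp (2 * q)) with (4 * C * q * (C * exp (2 * q))) by ring.
  apply Rmult_le_compat_l; [nra|].
  apply Rmult_le_compat; lra.
Qed.

Lemma choice2 {A B V : Type} (P : A -> B -> V -> Prop) :
  (forall a b, exists v, P a b v) -> exists g : A -> B -> V, forall a b, P a b (g a b).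
Proof.
  intros H. apply (choice (fun a h => forall b, P a b (h b))).
  intros a. exact (choice _ (H a)).
Qed.

Theorem lemmaB4
  (I1 I2 : R -> Prop)
  (hI1 : forall nu, I1 nu -> 0 < nu < 1)
  (f : R -> R -> R -> R) (theta : R -> R -> R) (C qs : R)
  (hC : 0 < C)
  (heven : forall nu a, I1 nu -> I2 a -> forall x, f nu a (- x) = f nu a x)
  (hcont : forall nu a, I1 nu -> I2 a -> forall x, continuous (f nu a) x)
  (hbound : forall nu a, I1 nu -> I2 a -> forall x, Rabs (f nu a x) <= C)
  (htheta0 : forall nu a, I1 nu -> I2 a -> 0 <= theta nu a)
  (htheta : forall nu a, I1 nu -> I2 a -> theta nu a <= C * nu ^ 2)
  (hlip : forall nu a, I1 nu -> I2 a -> forall x y,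
      Rabs (f nu a x - f nu a y) <= C / nu * Rabs (x - y))
  (hqs : 0 < qs) :
  (exists (L : R -> R -> R) (M : R), forall nu a, I1 nu -> I2 a -> forall X,
      / nu * (exp (qs * Rabs X) *
              Rabs (Gfun (f nu a) (theta nu a) qs X - nu * L nu a * tanh (qs * X)))
      + Rabs (L nu a) <= M)
  /\
  (exists M : R, forall nu a, I1 nu -> I2 a -> forall X,
      / nu ^ 2 * exp (2 * qs * Rabs X) * Rabs (Hfun (f nu a) (theta nu a) qs nu X) <= M).
Proof.
  split.
  - assert (HL : forall nu a, exists l, I1 nu -> I2 a -> forall X,
                 / nu * (exp (qs * Rabs X) *
                         Rabs (Gfun (f nu a) (theta nu a) qs X - nu * l * tanh (qs * X)))
                 + Rabs l <= 3 * C ^ 2).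
    { intros nu a. destruct (classic (I1 nu /\ I2 a)) as [[h1 h2] | hout].
      - destruct (Gfun_scaled_asymptote (f nu a) (theta nu a) qs C nu) as [l Hl]; auto.
        exists l. auto.
      - exists 0. tauto. }
    destruct (choice2 _ HL) as [L HLX].
    exists L, (3 * C ^ 2). intros nu a h1 h2. now apply HLX.
  - exists (4 * C ^ 2 * qs * exp (2 * qs)). intros nu a h1 h2 X.
    apply Hfun_scaled_le; auto.
Qed.
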